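(* Let $m > 1$ be an integer and $y \in \mathbb{R}^m$. Then there exists a subset $A \subset \{1,\dots,m\}$ such that $|y(i)| \le 2|y(j)|$ for all $i,j \in A$, and $\|y|_A\|_2 \ge \frac{1}{2.5\sqrt{\log m}}\|y\|_2$.
   Context: $y|_A$ denotes the restriction of $y$ to the coordinates in $A$. Here $\log$ denotes the binary logarithm. *)

From mathcomp Require Import all_boot all_order all_algebra.
From mathcomp Require Import all_classical all_reals all_analysis.
Import Order.TTheory GRing.Theory Num.Theory.
Local Open Scope ring_scope.

Definition log2 {R : realType} (x : R) : R := ln x / ln 2.

Definition l2norm_on {R : realType} {m : nat} (y : 'I_m -> R) (A : {set 'I_m}) : R :=
  Num.sqrt (\sum_(i in A) y i ^+ 2).

Definition l2norm {R : realType} {m : nat} (y : 'I_m -> R) : R :=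
  Num.sqrt (\sum_(i < m) y i ^+ 2).

From mathcomp Require Import all_boot all_order all_algebra.
From mathcomp Require Import all_classical all_reals all_analysis.
From mathcomp Require Import ring lra zify.
Import Order.TTheory GRing.Theory Num.Theory.
Local Open Scope ring_scope.

(* With M = ||y||_2, sort the coordinates into the dyadic shells
   M/2^(k+1) < |y i| <= M/2^k, k < K := floor(log m) + 1.  The coordinates in
   no shell have |y i| <= M/2^K, and since 2m <= 4^K they carry at most half
   of ||y||^2.  Hence some shell carries at least ||y||^2 / (2K), and
   2K <= 4 log m. *)

Section DyadicShells.

Context {R : realFieldType} {m : nat} (y : 'I_m -> R) (M : R).

Definition dyadic_shell (k : nat) : {set 'I_m} :=
  [set i | M / 2 ^+ k.+1 < `|y i| <= M / 2 ^+ k].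

Lemma dyadic_shell_ratio k i j :
  i \in dyadic_shell k -> j \in dyadic_shell k -> `|y i| <= 2 * `|y j|.
Proof.
rewrite !inE => /andP [_ hi] /andP [hj _].
have e : M / 2 ^+ k = 2 * (M / 2 ^+ k.+1).
  by rewrite exprS; field; rewrite expf_neq0.
lra.
Qed.

Hypothesis yM : forall i, `|y i| <= M.

Lemma notin_dyadic_shells n i :
  (forall k, (k < n)%N -> i \notin dyadic_shell k) -> `|y i| <= M / 2 ^+ n.
Proof.
elim: n => [_|n IHn notin]; first by rewrite expr0 divr1.
have := notin n (ltnSn n); rewrite inE IHn => [|k lt_kn]; last first.
  by apply: notin; rewrite ltnS ltnW.
by rewrite andbT -leNgt.
Qed.

Lemma sum_sqr_le_dyadic_shells n :
  \sum_(i < m) y i ^+ 2 <=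
  \sum_(k < n) \sum_(i in dyadic_shell k) y i ^+ 2 + m%:R * (M / 2 ^+ n) ^+ 2.
Proof.
have -> : m%:R * (M / 2 ^+ n) ^+ 2 = \sum_(i < m) (M / 2 ^+ n) ^+ 2.
  by rewrite sumr_const card_ord mulr_natl.
rewrite (exchange_big_dep xpredT) //= -big_split /=.
apply: ler_sum => i _.
case: (boolP [exists k : 'I_n, i \in dyadic_shell k]) => [/existsP [k ik]|].
  rewrite (bigD1 k) //= -addrA lerDl addr_ge0 ?sqr_ge0 //.
  by apply: sumr_ge0 => k' _; exact: sqr_ge0.
move=> /existsPn notin; apply: ler_wpDl.
  by apply: sumr_ge0 => k _; exact: sqr_ge0.
have small : `|y i| <= M / 2 ^+ n.
  by apply: notin_dyadic_shells => k lt_kn; exact: (notin (Ordinal lt_kn)).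
rewrite -real_normK ?num_real // ler_pXn2r // nnegrE.
exact: le_trans small.
Qed.

End DyadicShells.

Lemma exists_ge_mean {R : realFieldType} {n} (F : 'I_n -> R) :
  (0 < n)%N -> exists k, (\sum_k F k) / n%:R <= F k.
Proof.
move=> n_gt0; apply/existsP; apply: contraT => /existsPn lt_mean.
have : \sum_k F k < \sum_(k < n) (\sum_k F k) / n%:R.
  apply: ltr_sum => [|k _]; first by apply/hasP; exists (Ordinal n_gt0).
  by rewrite ltNge lt_mean.
rewrite sumr_const card_ord -[X in _ < X]mulr_natr divfK ?ltxx //.
by rewrite pnatr_eq0 -lt0n.
Qed.

Lemma natr_le_log2 {R : realType} (p m : nat) :
  (2 ^ p <= m)%N -> (p%:R : R) <= log2 m%:R.
Proof.
move=> le_2p_m; rewrite /log2 ler_pdivlMr ?ln_gt0 ?ltr1n // mulr_natl -lnXn //.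
rewrite ler_ln ?posrE ?exprn_gt0 // ?ltr0n -?natrX ?ler_nat //.
by apply: leq_trans le_2p_m; rewrite expn_gt0.
Qed.

Lemma scaled_sqrt_le {R : realType} (L N S : R) :
  0 < L -> 0 <= N -> N / (4 * L) <= S ->
  1 / (5 / 2 * Num.sqrt L) * Num.sqrt N <= Num.sqrt S.
Proof.
move=> L_gt0 N_ge0 le_NS.
set c := 1 / (5 / 2 * Num.sqrt L).
have c_ge0 : 0 <= c by rewrite divr_ge0 ?mulr_ge0 ?sqrtr_ge0.
have c2 : c ^+ 2 = 4 / (25 * L).
  by rewrite expr_div_n exprMn sqr_sqrtr ?ltW //; field; rewrite gt_eqF.
rewrite -[c]ger0_norm // -sqrtr_sqr -sqrtrM ?sqr_ge0 // ler_sqrt //.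
  apply: le_trans le_NS; rewrite c2 mulrC ler_wpM2l // ler_pdivrMr ?mulr_gt0 //.
  have -> : (4 * L)^-1 * (25 * L) = 25 / 4 by field; rewrite gt_eqF.
  lra.
by apply: le_trans le_NS; rewrite divr_ge0 // mulr_ge0 // ltW.
Qed.

Theorem lemma3p7 (R : realType) (m : nat) (hm : (1 < m)%N) (y : 'I_m -> R) :
  exists A : {set 'I_m},
    (forall i j, i \in A -> j \in A -> `|y i| <= 2 * `|y j|) /\
    l2norm_on y A >= (1 / ((5 / 2) * Num.sqrt (log2 (m%:R : R)))) * l2norm y.
Proof.
rewrite /l2norm; set N := \sum_(i < m) y i ^+ 2; set M := Num.sqrt N.
have N_ge0 : 0 <= N by apply: sumr_ge0 => i _; exact: sqr_ge0.
have yM i : `|y i| <= M.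
  rewrite /M -sqrtr_sqr ler_sqrt // /N (bigD1 i) //= lerDl.
  by apply: sumr_ge0 => j _; exact: sqr_ge0.
set p := trunc_log 2 m; set K := p.+1.
have /andP [le_2p_m lt_m_2K] : (2 ^ p <= m < 2 ^ K)%N.
  by apply: trunc_log_bounds; lia.
have p_ge1 : (1 <= p)%N by rewrite trunc_log_gt0.
have tail : m%:R * (M / 2 ^+ K) ^+ 2 <= N / 2.
  have : (m * 2 <= (2 ^ K) ^ 2)%N by nia.
  rewrite -(ler_nat R) natrM !natrX => le_m_4K.
  rewrite expr_div_n sqr_sqrtr // mulrCA ler_wpM2l // ler_pdivrMr ?exprn_gt0 //.
  lra.
pose S k := \sum_(i in dyadic_shell y M k) y i ^+ 2.
have half_le_S : N / 2 <= \sum_(k < K) S k.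
  by rewrite /S; have := sum_sqr_le_dyadic_shells y M yM K; rewrite -/N; lra.
have [k le_mean_S] := exists_ge_mean (fun k : 'I_K => S k) (ltn0Sn p).
have le_p_log : (p%:R : R) <= log2 m%:R by exact: natr_le_log2.
have p_ge1R : (1 : R) <= p%:R by rewrite ler1n.
exists (dyadic_shell y M k); split; first exact: dyadic_shell_ratio.
apply: scaled_sqrt_le => //; first lra.
apply: le_trans le_mean_S; apply: (@le_trans _ _ (N / (2 * K%:R))).
  by rewrite ler_wpM2l // /K -natr1 lef_pV2 ?posrE; lra.
by rewrite invfM mulrA ler_wpM2r ?invr_ge0 // ler_wpM2r.
Qed.
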